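(* Let $S: x=x(u,v)$, $(u,v)\in\mathcal D$, be a strongly regular Weingarten surface parameterized by principal parameters. Then $(u,v)$ are geometric principal parameters if and only if $\sqrt{EG}\,(\nu_1-\nu_2)$ is constant.
   Context: For a surface $x=x(u,v)$ without umbilical points parameterized by principal parameters ($F=M=0$, with $E,F,G$, $L,M,N$ the coefficients of the first and second fundamental forms): $\nu_1=L/E$, $\nu_2=N/G$, $\gamma_1=-\frac{E_v}{2E\sqrt G}$, $\gamma_2=\frac{G_u}{2G\sqrt E}$. The surface is strongly regular if $(\nu_1-\nu_2)\gamma_1\gamma_2\neq0$, with the convention $\nu_1-\nu_2>0$. A strongly regular surface is Weingarten if there exist differentiable $f(\nu),g(\nu)$, $\nu\in\mathcal I\subseteq\mathbb R$, with $f-g>0$, $f'g'\neq0$, and a differentiable $\nu(u,v)\in\mathcal I$ with $\nu_u\nu_v\neq0$, such that $\nu_1=f(\nu)$, $\nu_2=g(\nu)$. With $\Phi$ an antiderivative of $f'/(f-g)$ and $\Psi$ an antiderivative of $g'/(g-f)$, put $\lambda=\ln\sqrt E+\Phi(\nu)$ and $\mu=\ln\sqrt G+\Psi(\nu)$. Principal parameters are geometric principal parameters if $\lambda$ and $\mu$ are constants. *)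

From Stdlib Require Import Reals.
From Coquelicot Require Import Coquelicot.
Open Scope R_scope.

Definition V3 := (R * R * R)%type.
Definition c1 (a : V3) : R := fst (fst a).
Definition c2 (a : V3) : R := snd (fst a).
Definition c3 (a : V3) : R := snd a.
Definition dot (a b : V3) : R := c1 a * c1 b + c2 a * c2 b + c3 a * c3 b.
Definition cross (a b : V3) : V3 :=
  (c2 a * c3 b - c3 a * c2 b, c3 a * c1 b - c1 a * c3 b, c1 a * c2 b - c2 a * c1 b).
Definition vnorm (a : V3) : R := sqrt (dot a a).
Definition vscal (k : R) (a : V3) : V3 := (k * c1 a, k * c2 a, k * c3 a).
Definition vzero : V3 := (0, 0, 0).

Definition pd_u (h : R -> R -> R) : R -> R -> R := fun u v => Derive (fun t => h t v) u.
Definition pd_v (h : R -> R -> R) : R -> R -> R := fun u v => Derive (fun t => h u t) v.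

Definition vd_u (x : R -> R -> V3) : R -> R -> V3 := fun u v =>
  (pd_u (fun a b => c1 (x a b)) u v, pd_u (fun a b => c2 (x a b)) u v,
   pd_u (fun a b => c3 (x a b)) u v).
Definition vd_v (x : R -> R -> V3) : R -> R -> V3 := fun u v =>
  (pd_v (fun a b => c1 (x a b)) u v, pd_v (fun a b => c2 (x a b)) u v,
   pd_v (fun a b => c3 (x a b)) u v).

Fixpoint Ck (k : nat) (D : R * R -> Prop) (h : R -> R -> R) : Prop :=
  (forall p, D p -> continuous (fun q : R * R => h (fst q) (snd q)) p) /\
  match k with
  | O => True
  | S k' =>
      (forall p, D p -> ex_derive (fun t => h t (snd p)) (fst p) /\
                        ex_derive (fun t => h (fst p) t) (snd p)) /\
      Ck k' D (pd_u h) /\ Ck k' D (pd_v h)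
  end.

Definition smooth_on (D : R * R -> Prop) (h : R -> R -> R) : Prop :=
  forall k, Ck k D h.

Definition connected_set (D : R * R -> Prop) : Prop :=
  forall A B : R * R -> Prop, open A -> open B ->
    (forall p, D p -> A p \/ B p) ->
    (forall p, D p -> A p -> B p -> False) ->
    (exists p, D p /\ A p) -> (exists p, D p /\ B p) -> False.

Definition domain (D : R * R -> Prop) : Prop := open D /\ connected_set D.

Definition regular_surface (x : R -> R -> V3) (D : R * R -> Prop) : Prop :=
  domain D /\
  smooth_on D (fun u v => c1 (x u v)) /\
  smooth_on D (fun u v => c2 (x u v)) /\
  smooth_on D (fun u v => c3 (x u v)) /\
  (forall u v, D (u, v) -> cross (vd_u x u v) (vd_v x u v) <> vzero).

Definition unit_normal (x : R -> R -> V3) (u v : R) : V3 :=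
  vscal (/ vnorm (cross (vd_u x u v) (vd_v x u v))) (cross (vd_u x u v) (vd_v x u v)).

Definition E_ (x : R -> R -> V3) u v := dot (vd_u x u v) (vd_u x u v).
Definition F_ (x : R -> R -> V3) u v := dot (vd_u x u v) (vd_v x u v).
Definition G_ (x : R -> R -> V3) u v := dot (vd_v x u v) (vd_v x u v).
Definition L_ (x : R -> R -> V3) u v := dot (vd_u (vd_u x) u v) (unit_normal x u v).
Definition M_ (x : R -> R -> V3) u v := dot (vd_v (vd_u x) u v) (unit_normal x u v).
Definition N_ (x : R -> R -> V3) u v := dot (vd_v (vd_v x) u v) (unit_normal x u v).

(** Principal curvatures (in principal parameters) and the gammas *)
Definition nu1 x u v := L_ x u v / E_ x u v.
Definition nu2 x u v := N_ x u v / G_ x u v.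
Definition gamma1 x u v := - pd_v (E_ x) u v / (2 * E_ x u v * sqrt (G_ x u v)).
Definition gamma2 x u v := pd_u (G_ x) u v / (2 * G_ x u v * sqrt (E_ x u v)).

Definition principal_parameters (x : R -> R -> V3) (D : R * R -> Prop) : Prop :=
  forall u v, D (u, v) -> F_ x u v = 0 /\ M_ x u v = 0.

Definition no_umbilics (x : R -> R -> V3) (D : R * R -> Prop) : Prop :=
  forall u v, D (u, v) -> nu1 x u v <> nu2 x u v.

(** Strongly regular, with the convention nu1 - nu2 > 0 *)
Definition strongly_regular (x : R -> R -> V3) (D : R * R -> Prop) : Prop :=
  forall u v, D (u, v) ->
    (nu1 x u v - nu2 x u v) * gamma1 x u v * gamma2 x u v <> 0 /\
    nu1 x u v - nu2 x u v > 0.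

Definition weingarten_data (x : R -> R -> V3) (D : R * R -> Prop)
    (I : R -> Prop) (f g : R -> R) (nu : R -> R -> R) : Prop :=
  (forall t, I t ->
     ex_derive f t /\ ex_derive g t /\ f t - g t > 0 /\ Derive f t * Derive g t <> 0) /\
  (forall u v, D (u, v) ->
     I (nu u v) /\ differentiable_pt nu u v /\
     pd_u nu u v * pd_v nu u v <> 0 /\
     nu1 x u v = f (nu u v) /\ nu2 x u v = g (nu u v)).

Definition weingarten_surface (x : R -> R -> V3) (D : R * R -> Prop) : Prop :=
  exists I f g nu, weingarten_data x D I f g nu.

Definition antiderivative_on (I : R -> Prop) (Phi h : R -> R) : Prop :=
  forall t, I t -> is_derive Phi t (h t).

Definition lambda_ (x : R -> R -> V3) (nu : R -> R -> R) (Phi : R -> R) u v :=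
  ln (sqrt (E_ x u v)) + Phi (nu u v).
Definition mu_ (x : R -> R -> V3) (nu : R -> R -> R) (Psi : R -> R) u v :=
  ln (sqrt (G_ x u v)) + Psi (nu u v).

Definition constant_on (D : R * R -> Prop) (h : R -> R -> R) : Prop :=
  exists c, forall u v, D (u, v) -> h u v = c.

Definition geometric_principal_parameters (x : R -> R -> V3) (D : R * R -> Prop)
    (nu : R -> R -> R) (Phi Psi : R -> R) : Prop :=
  constant_on D (lambda_ x nu Phi) /\ constant_on D (mu_ x nu Psi).

(* In principal parameters the Codazzi equations read
     (nu1)_v = E_v / (2 E) (nu2 - nu1)   and   (nu2)_u = G_u / (2 G) (nu1 - nu2).
   With nu1 = f(nu), nu2 = g(nu) and the choice of Phi and Psi, they say exactly that
   lambda_v = 0 and mu_u = 0.  Moreover K := sqrt (E G) (nu1 - nu2) > 0 has the same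
   logarithmic derivative as lambda + mu, so K_u = K lambda_u and K_v = K mu_v.  Hence on
   the connected domain K is constant iff lambda_u = mu_v = 0 everywhere, i.e. iff lambda
   and mu are both constant. *)

From Stdlib Require Import Reals Lra.
From Coquelicot Require Import Coquelicot.
Open Scope R_scope.

(** * Calculus on the line and in the plane *)

Lemma is_derive_Rplus (f g : R -> R) (t df dg : R) :
  is_derive f t df -> is_derive g t dg -> is_derive (fun s => f s + g s) t (df + dg).
Proof. intros; now apply (is_derive_plus f g). Qed.

Lemma is_derive_Rminus (f g : R -> R) (t df dg : R) :
  is_derive f t df -> is_derive g t dg -> is_derive (fun s => f s - g s) t (df - dg).
Proof. intros; now apply (is_derive_minus f g). Qed.

Lemma is_derive_Ropp (f : R -> R) (t df : R) :
  is_derive f t df -> is_derive (fun s => - f s) t (- df).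
Proof. intros; now apply (is_derive_opp f). Qed.

Lemma is_derive_Rmult (f g : R -> R) (t df dg : R) :
  is_derive f t df -> is_derive g t dg ->
  is_derive (fun s => f s * g s) t (df * g t + f t * dg).
Proof. intros; apply (is_derive_mult f g); auto; exact Rmult_comm. Qed.

Lemma is_derive_Rcomp (f g : R -> R) (t df dg : R) :
  is_derive f (g t) df -> is_derive g t dg -> is_derive (fun s => f (g s)) t (df * dg).
Proof.
  intros Hf Hg. rewrite Rmult_comm. exact (is_derive_comp f g t df dg Hf Hg).
Qed.

Lemma is_derive_eq (f : R -> R) (t l l' : R) : is_derive f t l -> l = l' -> is_derive f t l'.
Proof. now intros H <-. Qed.

Lemma is_derive_ln_sqrt (e : R -> R) (t de : R) : is_derive e t de -> 0 < e t ->
  is_derive (fun s => ln (sqrt (e s))) t (de / (2 * e t)).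
Proof.
  intros He Hpos. pose proof (sqrt_lt_R0 _ Hpos) as Hsqrt.
  apply (is_derive_eq _ _ (/ sqrt (e t) * (de / (2 * sqrt (e t))))).
  - apply (is_derive_Rcomp ln (fun s => sqrt (e s))).
    + now apply is_derive_ln.
    + now apply (is_derive_sqrt e).
  - pose proof (sqrt_sqrt (e t) (Rlt_le _ _ Hpos)) as Hsq.
    set (r := sqrt (e t)) in *. rewrite <- Hsq. field. lra.
Qed.

Lemma open_locally_2d (D : R * R -> Prop) u v :
  open D -> D (u, v) -> locally_2d (fun a b => D (a, b)) u v.
Proof.
  intros HD Huv. apply locally_2d_locally.
  destruct (HD _ Huv) as [e He]. exists e. intros [a b] Hab. now apply He.
Qed.

Lemma open_locally_u (D : R * R -> Prop) u v : open D -> D (u, v) -> locally u (fun t => D (t, v)).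
Proof. intros. apply (locally_2d_1d_const_y (fun a b => D (a, b))). now apply open_locally_2d. Qed.

Lemma open_locally_v (D : R * R -> Prop) u v : open D -> D (u, v) -> locally v (fun t => D (u, t)).
Proof. intros. apply (locally_2d_1d_const_x (fun a b => D (a, b))). now apply open_locally_2d. Qed.

Lemma is_derive_constant_on_u (D : R * R -> Prop) (h : R -> R -> R) (u v l : R) :
  open D -> D (u, v) -> constant_on D h -> is_derive (fun t => h t v) u l -> l = 0.
Proof.
  intros HD Huv [c Hc] Hl. rewrite <- (is_derive_unique _ _ _ Hl). apply is_derive_unique.
  apply (is_derive_ext_loc (fun _ => c)); [|apply (is_derive_const c)].
  generalize (open_locally_u D u v HD Huv). apply filter_imp. intros t Ht. now rewrite Hc.
Qed.

Lemma is_derive_constant_on_v (D : R * R -> Prop) (h : R -> R -> R) (u v l : R) :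
  open D -> D (u, v) -> constant_on D h -> is_derive (fun t => h u t) v l -> l = 0.
Proof.
  intros HD Huv [c Hc] Hl. rewrite <- (is_derive_unique _ _ _ Hl). apply is_derive_unique.
  apply (is_derive_ext_loc (fun _ => c)); [|apply (is_derive_const c)].
  generalize (open_locally_v D u v HD Huv). apply filter_imp. intros t Ht. now rewrite Hc.
Qed.

Lemma eq_of_is_derive_zero_ball (F : R -> R) a b e :
  (forall t, Rabs (t - a) < e -> is_derive F t 0) -> Rabs (b - a) < e -> F a = F b.
Proof.
  intros HF Hb. apply Rabs_def2 in Hb.
  assert (Hin : forall t, Rmin a b <= t <= Rmax a b -> is_derive F t 0).
  { intros t [Ht1 Ht2]. apply HF, Rabs_def1;
      unfold Rmin, Rmax in *; destruct (Rle_dec a b); lra. }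
  destruct (Rtotal_order a b) as [Hab|[Hab|Hab]].
  - apply eq_is_derive; auto. intros t Ht. apply Hin.
    rewrite Rmin_left, Rmax_right; lra.
  - now subst.
  - symmetry. apply eq_is_derive; auto. intros t Ht. apply Hin.
    rewrite Rmin_right, Rmax_left; lra.
Qed.

Lemma locally_constant_of_partials_zero (D : R * R -> Prop) (h : R -> R -> R) u v :
  open D ->
  (forall a b, D (a, b) -> is_derive (fun t => h t b) a 0 /\ is_derive (fun t => h a t) b 0) ->
  D (u, v) -> locally (u, v) (fun q => h (fst q) (snd q) = h u v).
Proof.
  intros HD Hh Huv. apply (locally_2d_locally (fun a b => h a b = h u v)).
  destruct (open_locally_2d D u v HD Huv) as [e He]. exists e. intros a b Ha Hb.
  (* balls in the plane are squares, so the path (u,v) - (a,v) - (a,b) stays in D *)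
  transitivity (h a v).
  - symmetry. apply (eq_of_is_derive_zero_ball (fun t => h a t) v b e); [|exact Hb].
    intros t Ht. exact (proj2 (Hh a t (He a t Ha Ht))).
  - symmetry. apply (eq_of_is_derive_zero_ball (fun t => h t v) u a e); [|exact Ha].
    intros t Ht. apply (Hh t v), He; [exact Ht|].
    rewrite Rminus_eq_0, Rabs_R0. apply cond_pos.
Qed.

Lemma constant_on_of_locally_constant (D : R * R -> Prop) (h : R -> R -> R) :
  connected_set D ->
  (forall p, D p -> locally p (fun q => h (fst q) (snd q) = h (fst p) (snd p))) ->
  constant_on D h.
Proof.
  intros Hconn Hloc.
  destruct (Classical_Prop.classic (exists p, D p)) as [[p0 Hp0]|Hempty].
  2:{ exists 0. intros u v Huv. exfalso. apply Hempty. now exists (u, v). }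
  set (c := h (fst p0) (snd p0)).
  exists c. intros u v Huv. apply Classical_Prop.NNPP. intros Hne.
  apply (Hconn (fun p => locally p (fun q => h (fst q) (snd q) = c))
               (fun p => locally p (fun q => h (fst q) (snd q) <> c))).
  - intros p Hp. now apply locally_locally.
  - intros p Hp. now apply locally_locally.
  - intros p Hp. destruct (Req_dec (h (fst p) (snd p)) c) as [Hc|Hc];
      [left|right]; generalize (Hloc p Hp); apply filter_imp; intros q ->; exact Hc.
  - intros p _ HA HB. exact (locally_singleton _ _ HB (locally_singleton _ _ HA)).
  - exists p0. split; [exact Hp0|]. exact (Hloc p0 Hp0).
  - exists (u, v). split; [exact Huv|]. generalize (Hloc _ Huv). apply filter_imp.
    intros q Hq. now rewrite Hq.
Qed.

Lemma constant_on_of_partials_zero (D : R * R -> Prop) (h : R -> R -> R) :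
  domain D ->
  (forall u v, D (u, v) -> is_derive (fun t => h t v) u 0 /\ is_derive (fun t => h u t) v 0) ->
  constant_on D h.
Proof.
  intros [HD Hconn] Hh. apply constant_on_of_locally_constant; auto.
  intros [u v] Huv. now apply (locally_constant_of_partials_zero D).
Qed.

Lemma differentiable_pt_ex_derive (f : R -> R -> R) (x y : R) :
  differentiable_pt f x y ->
  ex_derive (fun t => f t y) x /\ ex_derive (fun t => f x t) y.
Proof.
  intros [lx [ly H]]. apply filterdiff_differentiable_pt_lim in H.
  split; [exists lx|exists ly]; unfold is_derive.
  - apply (filterdiff_ext_lin _ (fun t : R => t * lx + 0 * ly)).
    + apply (filterdiff_comp'_2 (fun t : R => t) (fun _ => y) (fun a b => f a b) x
               (fun t => t) (fun _ => zero) (fun a b => a * lx + b * ly));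
        [apply filterdiff_id|apply filterdiff_const|exact H].
    + intros t. change (t * lx + 0 * ly = t * lx). ring.
  - apply (filterdiff_ext_lin _ (fun t : R => 0 * lx + t * ly)).
    + apply (filterdiff_comp'_2 (fun _ => x) (fun t : R => t) (fun a b => f a b) y
               (fun _ => zero) (fun t => t) (fun a b => a * lx + b * ly));
        [apply filterdiff_const|apply filterdiff_id|exact H].
    + intros t. change (0 * lx + t * ly = t * ly). ring.
Qed.

Section Smooth.

Variables (D : R * R -> Prop) (h : R -> R -> R).
Hypothesis Hh : smooth_on D h.

Lemma smooth_on_pd_u : smooth_on D (pd_u h).
Proof. intros k. exact (proj1 (proj2 (proj2 (Hh (S k))))). Qed.

Lemma smooth_on_pd_v : smooth_on D (pd_v h).
Proof. intros k. exact (proj2 (proj2 (proj2 (Hh (S k))))). Qed.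

Lemma smooth_on_ex_derive (u v : R) : D (u, v) ->
  ex_derive (fun t => h t v) u /\ ex_derive (fun t => h u t) v.
Proof. intros Huv. exact (proj1 (proj2 (Hh 1%nat)) (u, v) Huv). Qed.

Lemma smooth_on_is_derive_u (u v : R) : D (u, v) -> is_derive (fun t => h t v) u (pd_u h u v).
Proof. intros Huv. apply Derive_correct, (smooth_on_ex_derive u v Huv). Qed.

Lemma smooth_on_is_derive_v (u v : R) : D (u, v) -> is_derive (fun t => h u t) v (pd_v h u v).
Proof. intros Huv. apply Derive_correct, (smooth_on_ex_derive u v Huv). Qed.

Lemma smooth_on_continuity_2d_pt (u v : R) : D (u, v) -> continuity_2d_pt h u v.
Proof. intros Huv. apply continuity_2d_pt_filterlim, (proj1 (Hh 0%nat) (u, v) Huv). Qed.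

End Smooth.

Lemma smooth_on_pd_uv (D : R * R -> Prop) (h : R -> R -> R) (u v : R) :
  open D -> smooth_on D h -> D (u, v) -> pd_u (pd_v h) u v = pd_v (pd_u h) u v.
Proof.
  intros HD Hh Huv. apply Schwarz.
  - destruct (open_locally_2d D u v HD Huv) as [e He]. exists e. intros a b Ha Hb.
    pose proof (He a b Ha Hb) as Hab.
    repeat split.
    + apply (smooth_on_ex_derive D h Hh a b Hab).
    + apply (smooth_on_ex_derive D h Hh a b Hab).
    + apply (smooth_on_ex_derive D _ (smooth_on_pd_v D h Hh) a b Hab).
    + apply (smooth_on_ex_derive D _ (smooth_on_pd_u D h Hh) a b Hab).
  - apply (smooth_on_continuity_2d_pt D); auto. apply smooth_on_pd_u, smooth_on_pd_v, Hh.
  - apply (smooth_on_continuity_2d_pt D); auto. apply smooth_on_pd_v, smooth_on_pd_u, Hh.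
Qed.

Definition swap_domain (D : R * R -> Prop) : R * R -> Prop := fun p => D (snd p, fst p).

Lemma open_swap_domain (D : R * R -> Prop) : open D -> open (swap_domain D).
Proof.
  intros HD [a b] Hab. apply (locally_2d_locally (fun a b => D (b, a))).
  destruct (open_locally_2d D b a HD Hab) as [e He].
  exists e. intros s t Hs Ht. now apply He.
Qed.

Lemma continuity_2d_pt_swap (h : R -> R -> R) (a b : R) :
  continuity_2d_pt h b a -> continuity_2d_pt (fun s t => h t s) a b.
Proof.
  intros H eps. destruct (H eps) as [d Hd]. exists d. intros s t Hs Ht. now apply Hd.
Qed.

Lemma Ck_swap (k : nat) (D : R * R -> Prop) (h : R -> R -> R) :
  Ck k D h -> Ck k (swap_domain D) (fun a b => h b a).
Proof.
  assert (Hcont : forall h, (forall p, D p -> continuous (fun q : R * R => h (fst q) (snd q) : R) p) ->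
     forall p, swap_domain D p -> continuous (fun q : R * R => h (snd q) (fst q) : R) p).
  { intros h' Hc [a b] Hab.
    apply (continuity_2d_pt_filterlim (fun s t => h' t s)), continuity_2d_pt_swap.
    apply continuity_2d_pt_filterlim, (Hc (b, a) Hab). }
  revert h. induction k as [|k IH]; intros h Hk.
  - split; [apply Hcont, Hk|exact I].
  - destruct Hk as [Hc [He [Hu Hv]]]. split; [apply Hcont, Hc|split; [|split]].
    + intros [a b] Hab. destruct (He (b, a) Hab). now split.
    + exact (IH (pd_v h) Hv).
    + exact (IH (pd_u h) Hu).
Qed.

Lemma smooth_on_swap (D : R * R -> Prop) (h : R -> R -> R) :
  smooth_on D h -> smooth_on (swap_domain D) (fun a b => h b a).
Proof. intros H k. apply Ck_swap, H. Qed.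

(** * Vectors in R^3 *)

Lemma dot_comm (a b : V3) : dot a b = dot b a.
Proof. unfold dot; ring. Qed.

Lemma dot_vscal (k : R) (a b : V3) : dot (vscal k a) b = k * dot a b.
Proof. unfold dot, vscal, c1, c2, c3; simpl. ring. Qed.

Lemma dot_self_pos (a : V3) : a <> vzero -> 0 < dot a a.
Proof.
  destruct a as [[a1 a2] a3]. unfold dot, vzero, c1, c2, c3; simpl. intros Ha.
  destruct (Rlt_dec 0 (a1 * a1 + a2 * a2 + a3 * a3)) as [Hpos|Hpos]; auto. exfalso. apply Ha.
  assert (a1 = 0) by nra. assert (a2 = 0) by nra. assert (a3 = 0) by nra. now subst.
Qed.

Lemma cross_dot_l (a b : V3) : dot (cross a b) a = 0.
Proof. unfold dot, cross, c1, c2, c3; simpl. ring. Qed.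

Lemma cross_dot_r (a b : V3) : dot (cross a b) b = 0.
Proof. unfold dot, cross, c1, c2, c3; simpl. ring. Qed.

Lemma cross_neq0_l (a b : V3) : cross a b <> vzero -> a <> vzero.
Proof. intros H ->. apply H. unfold cross, vzero, c1, c2, c3; simpl. f_equal; [f_equal|]; ring. Qed.

Lemma cross_neq0_r (a b : V3) : cross a b <> vzero -> b <> vzero.
Proof. intros H ->. apply H. unfold cross, vzero, c1, c2, c3; simpl. f_equal; [f_equal|]; ring. Qed.

Lemma cross_anticomm (a b : V3) : cross b a = vscal (-1) (cross a b).
Proof. unfold cross, vscal, c1, c2, c3; simpl. f_equal; [f_equal|]; ring. Qed.

Lemma vscal_opp_eq0 (a : V3) : vscal (-1) a = vzero -> a = vzero.
Proof.
  destruct a as [[a1 a2] a3]. unfold vscal, vzero, c1, c2, c3; simpl. intros H.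
  injection H as e1 e2 e3. f_equal; [f_equal|]; lra.
Qed.

Lemma vscal_comm (k l : R) (a : V3) : vscal k (vscal l a) = vscal l (vscal k a).
Proof. unfold vscal, c1, c2, c3; simpl. f_equal; [f_equal|]; ring. Qed.

Lemma vnorm_opp (a : V3) : vnorm (vscal (-1) a) = vnorm a.
Proof. unfold vnorm. f_equal. rewrite dot_vscal, dot_comm, dot_vscal. ring. Qed.

Lemma vnorm_pos (a : V3) : a <> vzero -> 0 < vnorm a.
Proof. intros H. apply sqrt_lt_R0, dot_self_pos, H. Qed.

Lemma dot_normalize (a : V3) : a <> vzero ->
  dot (vscal (/ vnorm a) a) (vscal (/ vnorm a) a) = 1.
Proof.
  intros Ha. pose proof (vnorm_pos a Ha) as Hn.
  rewrite dot_vscal, dot_comm, dot_vscal.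
  assert (Hsq : dot a a = vnorm a * vnorm a).
  { unfold vnorm. rewrite sqrt_sqrt; [reflexivity|]. now apply Rlt_le, dot_self_pos. }
  rewrite Hsq. field. lra.
Qed.

Lemma dot_normalize_eq0 (a w : V3) : a <> vzero ->
  dot w (vscal (/ vnorm a) a) = 0 -> dot w a = 0.
Proof.
  intros Ha H. rewrite dot_comm, dot_vscal in H. pose proof (vnorm_pos a Ha).
  rewrite dot_comm. apply Rmult_integral in H as [H|H]; [|exact H].
  exfalso. revert H. apply Rinv_neq_0_compat. lra.
Qed.

(* Expansion of [z . w] in the frame [a], [b], [a x b]. *)
Lemma dot_cross_frame (a b w z : V3) :
  dot (cross a b) (cross a b) * dot z w =
  (dot b b * dot w a - dot a b * dot w b) * dot z a +
  (dot a a * dot w b - dot a b * dot w a) * dot z b +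
  dot w (cross a b) * dot z (cross a b).
Proof. unfold dot, cross, c1, c2, c3; simpl. ring. Qed.

Lemma dot_cross_self (a b : V3) :
  dot (cross a b) (cross a b) = dot a a * dot b b - dot a b * dot a b.
Proof. unfold dot, cross, c1, c2, c3; simpl. ring. Qed.

Section OrthogonalFrame.

Variables a b : V3.
Hypotheses (Hab : dot a b = 0) (Hcross : cross a b <> vzero).

Lemma dot_parallel_l (w z : V3) : dot w b = 0 -> dot w (cross a b) = 0 ->
  dot a a * dot z w = dot w a * dot z a.
Proof.
  intros Hwb Hwc. pose proof (dot_cross_frame a b w z) as Hframe.
  rewrite dot_cross_self, Hab, Hwb, Hwc in Hframe.
  pose proof (dot_self_pos b (cross_neq0_r a b Hcross)) as Hb.
  apply (Rmult_eq_reg_l (dot b b)); [|lra]. nra.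
Qed.

Lemma dot_parallel_r (w z : V3) : dot w a = 0 -> dot w (cross a b) = 0 ->
  dot b b * dot z w = dot w b * dot z b.
Proof.
  intros Hwa Hwc. pose proof (dot_cross_frame a b w z) as Hframe.
  rewrite dot_cross_self, Hab, Hwa, Hwc in Hframe.
  pose proof (dot_self_pos a (cross_neq0_l a b Hcross)) as Ha.
  apply (Rmult_eq_reg_l (dot a a)); [|lra]. nra.
Qed.

End OrthogonalFrame.

Definition is_derive3 (F : R -> V3) (t : R) (F' : V3) : Prop :=
  is_derive (fun s => c1 (F s)) t (c1 F') /\ is_derive (fun s => c2 (F s)) t (c2 F') /\
  is_derive (fun s => c3 (F s)) t (c3 F').

Definition ex_derive3 (F : R -> V3) (t : R) : Prop :=
  ex_derive (fun s => c1 (F s)) t /\ ex_derive (fun s => c2 (F s)) t /\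
  ex_derive (fun s => c3 (F s)) t.

Lemma ex_derive3_is_derive3 (F : R -> V3) (t : R) : ex_derive3 F t -> exists F', is_derive3 F t F'.
Proof.
  intros [H1 [H2 H3]].
  exists (Derive (fun s => c1 (F s)) t, Derive (fun s => c2 (F s)) t, Derive (fun s => c3 (F s)) t).
  split; [|split]; now apply Derive_correct.
Qed.

Lemma is_derive3_ex_derive3 (F : R -> V3) (t : R) (F' : V3) : is_derive3 F t F' -> ex_derive3 F t.
Proof. intros [H1 [H2 H3]]. split; [|split]; eexists; eassumption. Qed.

Lemma is_derive_dot (A B : R -> V3) (t : R) (A' B' : V3) :
  is_derive3 A t A' -> is_derive3 B t B' ->
  is_derive (fun s => dot (A s) (B s)) t (dot A' (B t) + dot (A t) B').
Proof.
  intros [HA1 [HA2 HA3]] [HB1 [HB2 HB3]]. unfold dot.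
  eapply is_derive_eq.
  - apply is_derive_Rplus; [apply is_derive_Rplus|]; apply is_derive_Rmult; eassumption.
  - cbv beta. ring.
Qed.

Lemma ex_derive_Rminus (f g : R -> R) (t : R) :
  ex_derive f t -> ex_derive g t -> ex_derive (fun s => f s - g s) t.
Proof. intros [a Ha] [b Hb]. exists (a - b). now apply is_derive_Rminus. Qed.

Lemma ex_derive_Rmult (f g : R -> R) (t : R) :
  ex_derive f t -> ex_derive g t -> ex_derive (fun s => f s * g s) t.
Proof. intros [a Ha] [b Hb]. exists (a * g t + f t * b). now apply is_derive_Rmult. Qed.

Lemma ex_derive3_cross (A B : R -> V3) (t : R) :
  ex_derive3 A t -> ex_derive3 B t -> ex_derive3 (fun s => cross (A s) (B s)) t.
Proof.
  intros [HA1 [HA2 HA3]] [HB1 [HB2 HB3]]. unfold cross, c1, c2, c3 in *; simpl.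
  split; [|split]; apply ex_derive_Rminus; apply ex_derive_Rmult; assumption.
Qed.

Lemma ex_derive_vnorm (A : R -> V3) (t : R) :
  ex_derive3 A t -> A t <> vzero -> ex_derive (fun s => vnorm (A s)) t.
Proof.
  intros HA Hnz. destruct (ex_derive3_is_derive3 A t HA) as [A' HA'].
  eexists. apply (is_derive_sqrt (fun s => dot (A s) (A s))).
  - apply (is_derive_dot A A t A' A'); exact HA'.
  - now apply dot_self_pos.
Qed.

Lemma ex_derive3_normalize (A : R -> V3) (t : R) :
  ex_derive3 A t -> A t <> vzero -> ex_derive3 (fun s => vscal (/ vnorm (A s)) (A s)) t.
Proof.
  intros HA Hnz.
  assert (Hinv : ex_derive (fun s => / vnorm (A s)) t).
  { apply (ex_derive_inv (fun s => vnorm (A s))).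
    - now apply ex_derive_vnorm.
    - apply Rgt_not_eq, vnorm_pos, Hnz. }
  destruct HA as [HA1 [HA2 HA3]].
  split; [|split]; apply (ex_derive_Rmult (fun s => / vnorm (A s))); assumption.
Qed.

(** * Surfaces in principal parameters *)

Definition smooth_on3 (D : R * R -> Prop) (X : R -> R -> V3) : Prop :=
  smooth_on D (fun a b => c1 (X a b)) /\ smooth_on D (fun a b => c2 (X a b)) /\
  smooth_on D (fun a b => c3 (X a b)).

Section SmoothVector.

Variables (D : R * R -> Prop) (X : R -> R -> V3).
Hypothesis HX : smooth_on3 D X.

Lemma smooth_on3_vd_u : smooth_on3 D (vd_u X).
Proof. destruct HX as [H1 [H2 H3]]. split; [|split]; now apply smooth_on_pd_u. Qed.

Lemma smooth_on3_vd_v : smooth_on3 D (vd_v X).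
Proof. destruct HX as [H1 [H2 H3]]. split; [|split]; now apply smooth_on_pd_v. Qed.

Lemma smooth_on3_is_derive3_u (u v : R) : D (u, v) -> is_derive3 (fun s => X s v) u (vd_u X u v).
Proof. intros Huv. destruct HX as [H1 [H2 H3]]. split; [|split]; now apply (smooth_on_is_derive_u D). Qed.

Lemma smooth_on3_is_derive3_v (u v : R) : D (u, v) -> is_derive3 (fun s => X u s) v (vd_v X u v).
Proof. intros Huv. destruct HX as [H1 [H2 H3]]. split; [|split]; now apply (smooth_on_is_derive_v D). Qed.

Lemma smooth_on3_vd_uv (u v : R) : open D -> D (u, v) -> vd_u (vd_v X) u v = vd_v (vd_u X) u v.
Proof.
  intros HD Huv. destruct HX as [H1 [H2 H3]].
  change (vd_u (vd_v X) u v) with (pd_u (pd_v (fun a b => c1 (X a b))) u v,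
    pd_u (pd_v (fun a b => c2 (X a b))) u v, pd_u (pd_v (fun a b => c3 (X a b))) u v).
  now rewrite !(smooth_on_pd_uv D _ u v HD).
Qed.

End SmoothVector.

Lemma smooth_on3_swap (D : R * R -> Prop) (X : R -> R -> V3) :
  smooth_on3 D X -> smooth_on3 (swap_domain D) (fun a b => X b a).
Proof. intros [H1 [H2 H3]]. split; [|split]; now apply smooth_on_swap. Qed.

Lemma unit_normal_unit (x : R -> R -> V3) (u v : R) :
  cross (vd_u x u v) (vd_v x u v) <> vzero -> dot (unit_normal x u v) (unit_normal x u v) = 1.
Proof. apply dot_normalize. Qed.

Lemma unit_normal_perp_u (x : R -> R -> V3) (u v : R) : dot (unit_normal x u v) (vd_u x u v) = 0.
Proof. unfold unit_normal. rewrite dot_vscal, cross_dot_l. ring. Qed.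

Lemma unit_normal_perp_v (x : R -> R -> V3) (u v : R) : dot (unit_normal x u v) (vd_v x u v) = 0.
Proof. unfold unit_normal. rewrite dot_vscal, cross_dot_r. ring. Qed.

Lemma unit_normal_swap (x : R -> R -> V3) (a b : R) :
  unit_normal (fun s t => x t s) a b = vscal (-1) (unit_normal x b a).
Proof.
  unfold unit_normal. change (vd_u (fun s t => x t s) a b) with (vd_v x b a).
  change (vd_v (fun s t => x t s) a b) with (vd_u x b a).
  rewrite cross_anticomm, vnorm_opp. apply vscal_comm.
Qed.

Section UnitNormalDerivative.

Variables (D : R * R -> Prop) (x : R -> R -> V3) (u v : R).
Hypotheses (Hx : smooth_on3 D x) (Huv : D (u, v))
  (Hreg : cross (vd_u x u v) (vd_v x u v) <> vzero).

Lemma is_derive3_unit_normal_u : exists n', is_derive3 (fun s => unit_normal x s v) u n'.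
Proof.
  apply ex_derive3_is_derive3, (ex_derive3_normalize (fun s => cross (vd_u x s v) (vd_v x s v)));
    [|exact Hreg].
  apply ex_derive3_cross; eapply is_derive3_ex_derive3, smooth_on3_is_derive3_u; try exact Huv.
  - now apply smooth_on3_vd_u.
  - now apply smooth_on3_vd_v.
Qed.

Lemma is_derive3_unit_normal_v : exists n', is_derive3 (fun s => unit_normal x u s) v n'.
Proof.
  apply ex_derive3_is_derive3, (ex_derive3_normalize (fun s => cross (vd_u x u s) (vd_v x u s)));
    [|exact Hreg].
  apply ex_derive3_cross; eapply is_derive3_ex_derive3, smooth_on3_is_derive3_v; try exact Huv.
  - now apply smooth_on3_vd_u.
  - now apply smooth_on3_vd_v.
Qed.

End UnitNormalDerivative.

Lemma E_pos (x : R -> R -> V3) (u v : R) :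
  cross (vd_u x u v) (vd_v x u v) <> vzero -> 0 < E_ x u v.
Proof. intros H. exact (dot_self_pos _ (cross_neq0_l _ _ H)). Qed.

Lemma G_pos (x : R -> R -> V3) (u v : R) :
  cross (vd_u x u v) (vd_v x u v) <> vzero -> 0 < G_ x u v.
Proof. intros H. exact (dot_self_pos _ (cross_neq0_r _ _ H)). Qed.

Lemma smooth_on3_ex_derive_dot_u (D : R * R -> Prop) (X Y : R -> R -> V3) (u v : R) :
  smooth_on3 D X -> smooth_on3 D Y -> D (u, v) -> ex_derive (fun t => dot (X t v) (Y t v)) u.
Proof.
  intros HX HY Huv. eexists. apply is_derive_dot; now apply (smooth_on3_is_derive3_u D).
Qed.

Lemma smooth_on3_ex_derive_dot_v (D : R * R -> Prop) (X Y : R -> R -> V3) (u v : R) :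
  smooth_on3 D X -> smooth_on3 D Y -> D (u, v) -> ex_derive (fun t => dot (X u t) (Y u t)) v.
Proof.
  intros HX HY Huv. eexists. apply is_derive_dot; now apply (smooth_on3_is_derive3_v D).
Qed.

Section PrincipalParameters.

Variables (x : R -> R -> V3) (D : R * R -> Prop).
Hypotheses (HD : open D) (Hx : smooth_on3 D x)
  (Hreg : forall u v, D (u, v) -> cross (vd_u x u v) (vd_v x u v) <> vzero)
  (Hpp : principal_parameters x D).

Variables u v : R.
Hypothesis Huv : D (u, v).

Let Hxu := smooth_on3_vd_u D x Hx.
Let Hxv := smooth_on3_vd_v D x Hx.

Lemma F_constant_on : constant_on D (F_ x).
Proof. exists 0. intros a b Hab. exact (proj1 (Hpp a b Hab)). Qed.

Lemma M_constant_on : constant_on D (M_ x).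
Proof. exists 0. intros a b Hab. exact (proj2 (Hpp a b Hab)). Qed.

Lemma unit_normal_unit_constant_on :
  constant_on D (fun a b => dot (unit_normal x a b) (unit_normal x a b)).
Proof. exists 1. intros a b Hab. now apply unit_normal_unit, Hreg. Qed.

Lemma unit_normal_perp_u_constant_on :
  constant_on D (fun a b => dot (unit_normal x a b) (vd_u x a b)).
Proof. exists 0. intros a b _. apply unit_normal_perp_u. Qed.

Lemma unit_normal_perp_v_constant_on :
  constant_on D (fun a b => dot (unit_normal x a b) (vd_v x a b)).
Proof. exists 0. intros a b _. apply unit_normal_perp_v. Qed.

(* Rodrigues' formula [n_u = - nu1 x_u], tested against every vector [z]. *)
Lemma rodrigues_u (n' : V3) : is_derive3 (fun s => unit_normal x s v) u n' ->
  forall z, E_ x u v * dot z n' = - L_ x u v * dot z (vd_u x u v).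
Proof.
  intros Hn z.
  pose proof (smooth_on3_is_derive3_u D _ Hxu u v Huv) as Hxuu.
  pose proof (smooth_on3_is_derive3_u D _ Hxv u v Huv) as Hxvu.
  rewrite (smooth_on3_vd_uv D x Hx u v HD Huv) in Hxvu.
  assert (Hnn := is_derive_constant_on_u D _ u v _ HD Huv unit_normal_unit_constant_on
                   (is_derive_dot _ _ _ _ _ Hn Hn)).
  assert (Hna := is_derive_constant_on_u D _ u v _ HD Huv unit_normal_perp_u_constant_on
                   (is_derive_dot _ _ _ _ _ Hn Hxuu)).
  assert (Hnb := is_derive_constant_on_u D _ u v _ HD Huv unit_normal_perp_v_constant_on
                   (is_derive_dot _ _ _ _ _ Hn Hxvu)).
  pose proof (proj1 (Hpp u v Huv)) as HF. pose proof (proj2 (Hpp u v Huv)) as HM.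
  unfold F_, M_ in *. unfold E_, L_.
  rewrite (dot_comm (unit_normal x u v)) in Hnn, Hna, Hnb.
  rewrite (dot_parallel_l _ _ HF (Hreg u v Huv) n' z).
  - replace (dot n' (vd_u x u v)) with (- dot (vd_u (vd_u x) u v) (unit_normal x u v)) by lra.
    ring.
  - lra.
  - apply dot_normalize_eq0; [exact (Hreg u v Huv)|]. fold (unit_normal x u v). lra.
Qed.

Lemma rodrigues_v (n' : V3) : is_derive3 (fun s => unit_normal x u s) v n' ->
  forall z, G_ x u v * dot z n' = - N_ x u v * dot z (vd_v x u v).
Proof.
  intros Hn z.
  pose proof (smooth_on3_is_derive3_v D _ Hxu u v Huv) as Hxuv.
  pose proof (smooth_on3_is_derive3_v D _ Hxv u v Huv) as Hxvv.
  assert (Hnn := is_derive_constant_on_v D _ u v _ HD Huv unit_normal_unit_constant_on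
                   (is_derive_dot _ _ _ _ _ Hn Hn)).
  assert (Hna := is_derive_constant_on_v D _ u v _ HD Huv unit_normal_perp_u_constant_on
                   (is_derive_dot _ _ _ _ _ Hn Hxuv)).
  assert (Hnb := is_derive_constant_on_v D _ u v _ HD Huv unit_normal_perp_v_constant_on
                   (is_derive_dot _ _ _ _ _ Hn Hxvv)).
  pose proof (proj1 (Hpp u v Huv)) as HF. pose proof (proj2 (Hpp u v Huv)) as HM.
  unfold F_, M_ in *. unfold G_, N_.
  rewrite (dot_comm (unit_normal x u v)) in Hnn, Hna, Hnb.
  rewrite (dot_parallel_r _ _ HF (Hreg u v Huv) n' z).
  - replace (dot n' (vd_v x u v)) with (- dot (vd_v (vd_v x) u v) (unit_normal x u v)) by lra.
    ring.
  - lra.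
  - apply dot_normalize_eq0; [exact (Hreg u v Huv)|]. fold (unit_normal x u v). lra.
Qed.

Lemma E_is_derive_v : is_derive (fun t => E_ x u t) v
  (2 * dot (vd_u x u v) (vd_v (vd_u x) u v)).
Proof.
  eapply is_derive_eq.
  - exact (is_derive_dot _ _ _ _ _ (smooth_on3_is_derive3_v D _ Hxu u v Huv)
             (smooth_on3_is_derive3_v D _ Hxu u v Huv)).
  - rewrite dot_comm. ring.
Qed.

Lemma L_is_derive_v : is_derive (fun t => L_ x u t) v
  ((nu1 x u v + nu2 x u v) * dot (vd_u x u v) (vd_v (vd_u x) u v)).
Proof.
  destruct (is_derive3_unit_normal_u D x u v Hx Huv (Hreg u v Huv)) as [nu' Hnu].
  destruct (is_derive3_unit_normal_v D x u v Hx Huv (Hreg u v Huv)) as [nv' Hnv].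
  pose proof (smooth_on3_is_derive3_u D _ Hxu u v Huv) as Hxuu.
  pose proof (smooth_on3_is_derive3_u D _ Hxv u v Huv) as Hxvu.
  pose proof (smooth_on3_is_derive3_v D _ (smooth_on3_vd_u D _ Hxu) u v Huv) as Hxuuv.
  pose proof (smooth_on3_is_derive3_u D _ (smooth_on3_vd_v D _ Hxu) u v Huv) as Hxuvu.
  rewrite (smooth_on3_vd_uv D x Hx u v HD Huv) in Hxvu.
  rewrite (smooth_on3_vd_uv D (vd_u x) Hxu u v HD Huv) in Hxuvu.
  assert (HFu := is_derive_constant_on_u D _ u v _ HD Huv F_constant_on
                   (is_derive_dot _ _ _ _ _ Hxuu Hxvu)).
  assert (HMu := is_derive_constant_on_u D _ u v _ HD Huv M_constant_on
                   (is_derive_dot _ _ _ _ _ Hxuvu Hnu)).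
  pose proof (rodrigues_u nu' Hnu (vd_v (vd_u x) u v)) as Hru.
  pose proof (rodrigues_v nv' Hnv (vd_u (vd_u x) u v)) as Hrv.
  pose proof (E_pos x u v (Hreg u v Huv)) as HE. pose proof (G_pos x u v (Hreg u v Huv)) as HG.
  eapply is_derive_eq; [exact (is_derive_dot _ _ _ _ _ Hxuuv Hnv)|].
  unfold nu1, nu2, E_, G_, L_, N_ in *. cbv beta in HFu, HMu.
  set (a := vd_u x u v) in *. set (b := vd_v x u v) in *. set (n := unit_normal x u v) in *.
  set (xuu := vd_u (vd_u x) u v) in *. set (xuv := vd_v (vd_u x) u v) in *.
  set (xvv := vd_v (vd_v x) u v) in *. set (xuuv := vd_v (vd_u (vd_u x)) u v) in *.
  assert (Hnormal : dot xuuv n = dot xuu n * dot a xuv / dot a a).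
  { rewrite (dot_comm xuv a) in Hru. field_simplify_eq; [|lra]. nra. }
  assert (Htangent : dot xuu nv' = dot xvv n * dot a xuv / dot b b).
  { field_simplify_eq; [|lra]. nra. }
  rewrite Hnormal, Htangent. field. lra.
Qed.

Lemma codazzi_nu1_v : is_derive (fun t => nu1 x u t) v
  (pd_v (E_ x) u v / (2 * E_ x u v) * (nu2 x u v - nu1 x u v)).
Proof.
  pose proof (E_pos x u v (Hreg u v Huv)) as HE. pose proof (G_pos x u v (Hreg u v Huv)) as HG.
  replace (pd_v (E_ x) u v) with (2 * dot (vd_u x u v) (vd_v (vd_u x) u v))
    by (symmetry; apply is_derive_unique, E_is_derive_v).
  eapply is_derive_eq.
  - apply (is_derive_Rmult (fun t => L_ x u t) (fun t => / E_ x u t)); [exact L_is_derive_v|].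
    apply (is_derive_inv (fun t => E_ x u t)); [exact E_is_derive_v|cbv beta; lra].
  - unfold nu1, nu2. field. lra.
Qed.

End PrincipalParameters.

Lemma principal_parameters_swap (x : R -> R -> V3) (D : R * R -> Prop) :
  open D -> smooth_on3 D x -> principal_parameters x D ->
  principal_parameters (fun a b => x b a) (swap_domain D).
Proof.
  intros HD Hx Hpp a b Hab. destruct (Hpp b a Hab) as [HF HM]. split.
  - change (dot (vd_v x b a) (vd_u x b a) = 0). now rewrite dot_comm.
  - change (dot (vd_u (vd_v x) b a) (unit_normal (fun s t => x t s) a b) = 0).
    rewrite unit_normal_swap, (smooth_on3_vd_uv D x Hx b a HD Hab), dot_comm, dot_vscal, dot_comm.
    unfold M_ in HM. rewrite HM. ring.
Qed.

Lemma nu1_swap (x : R -> R -> V3) (a b : R) : nu1 (fun s t => x t s) a b = - nu2 x b a.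
Proof.
  unfold nu1, nu2, L_, N_. rewrite unit_normal_swap, (dot_comm _ (vscal _ _)), dot_vscal, dot_comm.
  change (vd_u (vd_u (fun s t => x t s)) a b) with (vd_v (vd_v x) b a).
  change (E_ (fun s t => x t s) a b) with (G_ x b a). unfold Rdiv. ring.
Qed.

Lemma nu2_swap (x : R -> R -> V3) (a b : R) : nu2 (fun s t => x t s) a b = - nu1 x b a.
Proof.
  unfold nu1, nu2, L_, N_. rewrite unit_normal_swap, (dot_comm _ (vscal _ _)), dot_vscal, dot_comm.
  change (vd_v (vd_v (fun s t => x t s)) a b) with (vd_u (vd_u x) b a).
  change (G_ (fun s t => x t s) a b) with (E_ x b a). unfold Rdiv. ring.
Qed.

(* The Codazzi equation for [nu2] is the one for [nu1] on the surface with [u] and [v]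
   exchanged, whose principal curvatures are [- nu2] and [- nu1]. *)
Lemma codazzi_nu2_u (x : R -> R -> V3) (D : R * R -> Prop) (u v : R) :
  open D -> smooth_on3 D x ->
  (forall u v, D (u, v) -> cross (vd_u x u v) (vd_v x u v) <> vzero) ->
  principal_parameters x D -> D (u, v) ->
  is_derive (fun t => nu2 x t v) u
    (pd_u (G_ x) u v / (2 * G_ x u v) * (nu1 x u v - nu2 x u v)).
Proof.
  intros HD Hx Hreg Hpp Huv.
  assert (Hreg' : forall a b, swap_domain D (a, b) ->
            cross (vd_u (fun s t => x t s) a b) (vd_v (fun s t => x t s) a b) <> vzero).
  { intros a b Hab. change (cross (vd_v x b a) (vd_u x b a) <> vzero).
    rewrite cross_anticomm. intros H. exact (Hreg b a Hab (vscal_opp_eq0 _ H)). }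
  pose proof (codazzi_nu1_v _ _ (open_swap_domain D HD) (smooth_on3_swap D x Hx) Hreg'
                (principal_parameters_swap x D HD Hx Hpp) v u Huv) as Hcod.
  apply (is_derive_ext (fun t => - nu1 (fun s t => x t s) v t)).
  { intros t. rewrite nu1_swap. apply Ropp_involutive. }
  eapply is_derive_eq; [apply (is_derive_Ropp _ _ _ Hcod)|].
  rewrite nu1_swap, nu2_swap. change (E_ (fun s t => x t s) v u) with (G_ x u v).
  change (pd_v (E_ (fun s t => x t s)) v u) with (pd_u (G_ x) u v). ring.
Qed.

(** * Weingarten surfaces *)

Lemma is_derive_ln_sqrt_plus_comp (e nuL Phi : R -> R) (t de dn dPhi : R) :
  is_derive e t de -> 0 < e t -> is_derive nuL t dn -> is_derive Phi (nuL t) dPhi ->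
  is_derive (fun s => ln (sqrt (e s)) + Phi (nuL s)) t (de / (2 * e t) + dPhi * dn).
Proof.
  intros He Hpos Hn HPhi.
  apply is_derive_Rplus; [now apply is_derive_ln_sqrt|now apply (is_derive_Rcomp Phi nuL)].
Qed.

Lemma is_derive_sqrt_mult_gap (E G n1 n2 : R -> R) (t dE dG d1 d2 : R) :
  is_derive E t dE -> is_derive G t dG -> is_derive n1 t d1 -> is_derive n2 t d2 ->
  0 < E t -> 0 < G t ->
  is_derive (fun s => sqrt (E s * G s) * (n1 s - n2 s)) t
    (sqrt (E t * G t) * ((dE / (2 * E t) + dG / (2 * G t)) * (n1 t - n2 t) + (d1 - d2))).
Proof.
  intros HE HG H1 H2 HEpos HGpos. assert (HEG : 0 < E t * G t) by nra.
  eapply is_derive_eq.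
  - apply is_derive_Rmult; [|apply (is_derive_Rminus _ _ _ _ _ H1 H2)].
    apply (is_derive_sqrt (fun s => E s * G s)); [apply (is_derive_Rmult _ _ _ _ _ HE HG)|exact HEG].
  - cbv beta. pose proof (sqrt_lt_R0 _ HEG) as Hsqrt.
    pose proof (sqrt_sqrt (E t * G t) (Rlt_le _ _ HEG)) as Hsq.
    set (r := sqrt (E t * G t)) in *. field_simplify_eq; [|lra].
    replace (r ^ 2) with (E t * G t) by (rewrite <- Hsq; ring). ring.
Qed.

Section WeingartenLine.

Variables (f g Phi Psi E G n1 n2 nuL : R -> R) (t dE dG dn : R).
Hypotheses (HE : is_derive E t dE) (HG : is_derive G t dG) (Hn : is_derive nuL t dn)
  (HEpos : 0 < E t) (HGpos : 0 < G t)
  (Hn12 : locally t (fun s => n1 s = f (nuL s) /\ n2 s = g (nuL s)))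
  (Hf : ex_derive f (nuL t)) (Hg : ex_derive g (nuL t)) (Hfg : f (nuL t) - g (nuL t) > 0)
  (HPhi : is_derive Phi (nuL t) (Derive f (nuL t) / (f (nuL t) - g (nuL t))))
  (HPsi : is_derive Psi (nuL t) (Derive g (nuL t) / (g (nuL t) - f (nuL t)))).

Lemma line_is_derive_n1 : is_derive n1 t (Derive f (nuL t) * dn).
Proof.
  apply (is_derive_ext_loc (fun s => f (nuL s))).
  - generalize Hn12. apply filter_imp. intros s [-> _]. reflexivity.
  - apply is_derive_Rcomp; [now apply Derive_correct|exact Hn].
Qed.

Lemma line_is_derive_n2 : is_derive n2 t (Derive g (nuL t) * dn).
Proof.
  apply (is_derive_ext_loc (fun s => g (nuL s))).
  - generalize Hn12. apply filter_imp. intros s [_ ->]. reflexivity.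
  - apply is_derive_Rcomp; [now apply Derive_correct|exact Hn].
Qed.

Let Hn1 := locally_singleton _ _ Hn12.

Lemma line_lambda_stationary : is_derive n1 t (dE / (2 * E t) * (n2 t - n1 t)) ->
  is_derive (fun s => ln (sqrt (E s)) + Phi (nuL s)) t 0.
Proof.
  intros Hcod. pose proof (is_derive_unique _ _ _ Hcod) as Hd.
  rewrite (is_derive_unique _ _ _ line_is_derive_n1), (proj1 Hn1), (proj2 Hn1) in Hd.
  eapply is_derive_eq; [apply (is_derive_ln_sqrt_plus_comp _ _ _ _ _ _ _ HE HEpos Hn HPhi)|].
  replace (Derive f (nuL t) / (f (nuL t) - g (nuL t)) * dn)
    with (Derive f (nuL t) * dn / (f (nuL t) - g (nuL t))) by (field; lra).
  rewrite Hd. field. lra.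
Qed.

Lemma line_mu_stationary : is_derive n2 t (dG / (2 * G t) * (n1 t - n2 t)) ->
  is_derive (fun s => ln (sqrt (G s)) + Psi (nuL s)) t 0.
Proof.
  intros Hcod. pose proof (is_derive_unique _ _ _ Hcod) as Hd.
  rewrite (is_derive_unique _ _ _ line_is_derive_n2), (proj1 Hn1), (proj2 Hn1) in Hd.
  eapply is_derive_eq; [apply (is_derive_ln_sqrt_plus_comp _ _ _ _ _ _ _ HG HGpos Hn HPsi)|].
  replace (Derive g (nuL t) / (g (nuL t) - f (nuL t)) * dn)
    with (Derive g (nuL t) * dn / (g (nuL t) - f (nuL t))) by (field; lra).
  rewrite Hd. field. lra.
Qed.

(* Since [Phi' + Psi' = (f' - g') / (f - g)], the logarithmic derivative of
   [sqrt (E G) (n1 - n2)] is that of [lambda + mu]. *)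
Lemma line_gap_is_derive (lam mu : R) :
  is_derive (fun s => ln (sqrt (E s)) + Phi (nuL s)) t lam ->
  is_derive (fun s => ln (sqrt (G s)) + Psi (nuL s)) t mu ->
  is_derive (fun s => sqrt (E s * G s) * (n1 s - n2 s)) t
    (sqrt (E t * G t) * (n1 t - n2 t) * (lam + mu)).
Proof.
  intros Hlam Hmu.
  rewrite <- (is_derive_unique _ _ _ Hlam), <- (is_derive_unique _ _ _ Hmu).
  rewrite (is_derive_unique _ _ _ (is_derive_ln_sqrt_plus_comp _ _ _ _ _ _ _ HE HEpos Hn HPhi)).
  rewrite (is_derive_unique _ _ _ (is_derive_ln_sqrt_plus_comp _ _ _ _ _ _ _ HG HGpos Hn HPsi)).
  eapply is_derive_eq.
  - exact (is_derive_sqrt_mult_gap _ _ _ _ _ _ _ _ _ HE HG line_is_derive_n1 line_is_derive_n2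
             HEpos HGpos).
  - rewrite (proj1 Hn1), (proj2 Hn1). field. lra.
Qed.

End WeingartenLine.

Definition sqrtEG_gap (x : R -> R -> V3) (u v : R) : R :=
  sqrt (E_ x u v * G_ x u v) * (nu1 x u v - nu2 x u v).

Lemma sqrtEG_gap_pos (x : R -> R -> V3) (u v : R) :
  cross (vd_u x u v) (vd_v x u v) <> vzero -> nu1 x u v - nu2 x u v > 0 -> 0 < sqrtEG_gap x u v.
Proof.
  intros Hreg Hgap. pose proof (E_pos x u v Hreg). pose proof (G_pos x u v Hreg).
  apply Rmult_lt_0_compat; [apply sqrt_lt_R0; nra|lra].
Qed.

Section Weingarten.

Variables (x : R -> R -> V3) (D : R * R -> Prop) (I : R -> Prop) (f g : R -> R)
  (nu : R -> R -> R) (Phi Psi : R -> R).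
Hypotheses (HD : open D) (Hx : smooth_on3 D x)
  (Hreg : forall u v, D (u, v) -> cross (vd_u x u v) (vd_v x u v) <> vzero)
  (Hpp : principal_parameters x D) (Hw : weingarten_data x D I f g nu)
  (HPhi : antiderivative_on I Phi (fun t => Derive f t / (f t - g t)))
  (HPsi : antiderivative_on I Psi (fun t => Derive g t / (g t - f t))).

Variables u v : R.
Hypothesis Huv : D (u, v).

Let Hxu := smooth_on3_vd_u D x Hx.
Let Hxv := smooth_on3_vd_v D x Hx.

Lemma weingarten_partials_v :
  is_derive (fun t => lambda_ x nu Phi u t) v 0 /\
  exists mv, is_derive (fun t => mu_ x nu Psi u t) v mv /\
             is_derive (fun t => sqrtEG_gap x u t) v (sqrtEG_gap x u v * mv).
Proof.
  destruct Hw as [Hfg Hpts]. destruct (Hpts u v Huv) as [HI [Hdn _]].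
  destruct (Hfg _ HI) as [Hf [Hg [Hgap _]]].
  pose proof (Derive_correct _ _ (smooth_on3_ex_derive_dot_v D _ _ u v Hxu Hxu Huv)) as HE.
  pose proof (Derive_correct _ _ (smooth_on3_ex_derive_dot_v D _ _ u v Hxv Hxv Huv)) as HG.
  pose proof (Derive_correct _ _ (proj2 (differentiable_pt_ex_derive _ _ _ Hdn))) as Hn.
  assert (Hn12 : locally v (fun s => nu1 x u s = f (nu u s) /\ nu2 x u s = g (nu u s))).
  { generalize (open_locally_v D u v HD Huv). apply filter_imp.
    intros s Hs. apply (Hpts u s Hs). }
  pose proof (E_pos x u v (Hreg u v Huv)) as HEpos. pose proof (G_pos x u v (Hreg u v Huv)) as HGpos.
  pose proof (line_lambda_stationary f g Phi _ _ _ _ v _ _ HE Hn HEpos Hn12 Hf Hgap (HPhi _ HI)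
                (codazzi_nu1_v x D HD Hx Hreg Hpp u v Huv)) as Hlam.
  pose proof (is_derive_ln_sqrt_plus_comp _ _ _ _ _ _ _ HG HGpos Hn (HPsi _ HI)) as Hmu.
  split; [exact Hlam|]. eexists. split; [exact Hmu|].
  eapply is_derive_eq.
  - exact (line_gap_is_derive f g Phi Psi _ _ _ _ _ v _ _ _ HE HG Hn HEpos HGpos Hn12
             Hf Hg Hgap (HPhi _ HI) (HPsi _ HI) _ _ Hlam Hmu).
  - unfold sqrtEG_gap, E_, G_. ring.
Qed.

Lemma weingarten_partials_u :
  is_derive (fun t => mu_ x nu Psi t v) u 0 /\
  exists lu, is_derive (fun t => lambda_ x nu Phi t v) u lu /\
             is_derive (fun t => sqrtEG_gap x t v) u (sqrtEG_gap x u v * lu).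
Proof.
  destruct Hw as [Hfg Hpts]. destruct (Hpts u v Huv) as [HI [Hdn _]].
  destruct (Hfg _ HI) as [Hf [Hg [Hgap _]]].
  pose proof (Derive_correct _ _ (smooth_on3_ex_derive_dot_u D _ _ u v Hxu Hxu Huv)) as HE.
  pose proof (Derive_correct _ _ (smooth_on3_ex_derive_dot_u D _ _ u v Hxv Hxv Huv)) as HG.
  pose proof (Derive_correct _ _ (proj1 (differentiable_pt_ex_derive _ _ _ Hdn))) as Hn.
  assert (Hn12 : locally u (fun s => nu1 x s v = f (nu s v) /\ nu2 x s v = g (nu s v))).
  { generalize (open_locally_u D u v HD Huv). apply filter_imp.
    intros s Hs. apply (Hpts s v Hs). }
  pose proof (E_pos x u v (Hreg u v Huv)) as HEpos. pose proof (G_pos x u v (Hreg u v Huv)) as HGpos.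
  pose proof (line_mu_stationary f g Psi _ _ _ _ u _ _ HG Hn HGpos Hn12 Hg Hgap (HPsi _ HI)
                (codazzi_nu2_u x D u v HD Hx Hreg Hpp Huv)) as Hmu.
  pose proof (is_derive_ln_sqrt_plus_comp _ _ _ _ _ _ _ HE HEpos Hn (HPhi _ HI)) as Hlam.
  split; [exact Hmu|]. eexists. split; [exact Hlam|].
  eapply is_derive_eq.
  - exact (line_gap_is_derive f g Phi Psi _ _ _ _ _ u _ _ _ HE HG Hn HEpos HGpos Hn12
             Hf Hg Hgap (HPhi _ HI) (HPsi _ HI) _ _ Hlam Hmu).
  - unfold sqrtEG_gap, E_, G_. ring.
Qed.

End Weingarten.

Theorem proposition4p6 (x : R -> R -> V3) (D : R * R -> Prop)
    (I : R -> Prop) (f g : R -> R) (nu : R -> R -> R) (Phi Psi : R -> R) :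
  regular_surface x D ->
  principal_parameters x D ->
  no_umbilics x D ->
  strongly_regular x D ->
  weingarten_data x D I f g nu ->
  antiderivative_on I Phi (fun t => Derive f t / (f t - g t)) ->
  antiderivative_on I Psi (fun t => Derive g t / (g t - f t)) ->
  (geometric_principal_parameters x D nu Phi Psi <->
   constant_on D (fun u v => sqrt (E_ x u v * G_ x u v) * (nu1 x u v - nu2 x u v))).
Proof.
  intros [Hdom [H1 [H2 [H3 Hreg]]]] Hpp _ Hsr Hw HPhi HPsi.
  assert (Hx : smooth_on3 D x) by (split; [|split]; assumption).
  pose proof (proj1 Hdom) as HD.
  pose proof (weingarten_partials_u x D I f g nu Phi Psi HD Hx Hreg Hpp Hw HPhi HPsi) as Hu.
  pose proof (weingarten_partials_v x D I f g nu Phi Psi HD Hx Hreg Hpp Hw HPhi HPsi) as Hv.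
  change (geometric_principal_parameters x D nu Phi Psi <-> constant_on D (sqrtEG_gap x)).
  split.
  - intros [Hlam Hmu]. apply constant_on_of_partials_zero; [exact Hdom|]. intros u v Huv.
    destruct (Hu u v Huv) as [_ [lu [Hlu HKu]]]. destruct (Hv u v Huv) as [_ [mv [Hmv HKv]]].
    rewrite (is_derive_constant_on_u D _ u v lu HD Huv Hlam Hlu), Rmult_0_r in HKu.
    rewrite (is_derive_constant_on_v D _ u v mv HD Huv Hmu Hmv), Rmult_0_r in HKv.
    now split.
  - intros HK. split; apply constant_on_of_partials_zero; try exact Hdom; intros u v Huv;
      pose proof (sqrtEG_gap_pos x u v (Hreg u v Huv) (proj2 (Hsr u v Huv))) as Hpos;
      destruct (Hu u v Huv) as [Hmu_u [lu [Hlu HKu]]]; destruct (Hv u v Huv) as [Hlam_v [mv [Hmv HKv]]].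
    + apply (is_derive_constant_on_u D _ u v _ HD Huv HK) in HKu.
      split; [|exact Hlam_v]. replace 0 with lu by nra. exact Hlu.
    + apply (is_derive_constant_on_v D _ u v _ HD Huv HK) in HKv.
      split; [exact Hmu_u|]. replace 0 with mv by nra. exact Hmv.
Qed.
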